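(* Let $k\ge4$ and $d\ge1$. Let $x$ be a monomial of degree $(k-2)(2^d-1)$ in $P_k$. If $\omega_1(x)<k$ and there is $r>d$ with $\omega_r(x)>0$, then $x\in P_k^-((k-2)|^d)+\mathcal A(d-1)^+P_k$.
   Context: $P_k=\mathbb F_2[x_1,\dots,x_k]$, $\deg x_i=1$, a module over the mod-2 Steenrod algebra $\mathcal A$. $\mathcal A(d-1)$ is the sub-Hopf algebra generated by $Sq^i$, $0\le i<2^d$, and $\mathcal A(d-1)^+$ its augmentation ideal. For $x=x_1^{a_1}\cdots x_k^{a_k}$, $\omega_i(x)=\sum_j\alpha_{i-1}(a_j)$, with $\alpha_r(a)$ the $r$-th binary digit; weight vectors are ordered left-lexicographically. $(k-2)|^d$ is the weight vector with first $d$ entries $k-2$ and the rest $0$; $P_k^-((k-2)|^d)$ is spanned by monomials $y$ of degree $(k-2)(2^d-1)$ with $\omega(y)<(k-2)|^d$. *)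

From HB Require Import structures.
From mathcomp Require Import all_boot all_order all_algebra.
From mathcomp Require Import mpoly.
Set Implicit Arguments. Unset Strict Implicit. Unset Printing Implicit Defensive.
Import GRing.Theory.
Local Open Scope ring_scope.

(* Sq^i on a monomial x^m, by the Cartan formula and Sq^j(x^a) = C(a,j) x^(a+j):
   Sq^i(x_1^{a_1}...x_k^{a_k}) = sum_{e_1+...+e_k = i} prod_j C(a_j,e_j) x_j^{a_j+e_j}. *)
Definition Sqmon (k i : nat) (m : 'X_{1..k}) : {mpoly 'F_2[k]} :=
  \sum_(e : {ffun 'I_k -> 'I_i.+1} | (\sum_(j < k) (e j : nat))%N == i)
     (\prod_(j < k) 'C(m j, e j))%:R *: 'X_[[multinom (m j + e j)%N | j < k]].

Definition Sq (k i : nat) (p : {mpoly 'F_2[k]}) : {mpoly 'F_2[k]} :=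
  \sum_(m <- msupp p) p@_m *: Sqmon i m.

Definition Sqw (k : nat) (w : seq nat) (p : {mpoly 'F_2[k]}) : {mpoly 'F_2[k]} :=
  foldr (fun i q => Sq i q) p w.

(* A(d-1)^+ P_k : the F_2-span of all theta(f), theta a nonempty product of
   generators Sq^i with 0 < i < 2^d (these products span A(d-1)^+). *)
Inductive hitd (k d : nat) : {mpoly 'F_2[k]} -> Prop :=
| hitd0 : hitd d 0
| hitdD p q : hitd d p -> hitd d q -> hitd d (p + q)
| hitdSq (w : seq nat) (f : {mpoly 'F_2[k]}) :
    w != [::] -> all (fun i => (0 < i < 2 ^ d)%N) w -> hitd d (Sqw w f).

Definition alpha (r a : nat) : nat := odd (a %/ 2 ^ r).

Definition omega (k i : nat) (m : 'X_{1..k}) : nat :=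
  (\sum_(j < k) alpha i.-1 (m j))%N.

Definition wtop (k d i : nat) : nat := if (1 <= i <= d)%N then (k - 2)%N else 0%N.

Definition weight_lt (k d : nat) (m : 'X_{1..k}) : Prop :=
  exists r : nat, (1 <= r)%N /\
    (forall s : nat, (1 <= s < r)%N -> omega s m = wtop k d s) /\
    (omega r m < wtop k d r)%N.

Definition Pminus (k d : nat) (p : {mpoly 'F_2[k]}) : Prop :=
  forall m : 'X_{1..k}, m \in msupp p ->
    mdeg m = ((k - 2) * (2 ^ d - 1))%N /\ weight_lt d m.

From HB Require Import structures.
From mathcomp Require Import all_boot all_order all_algebra.
From mathcomp Require Import mpoly.
From mathcomp Require Import zify.

Set Implicit Arguments. Unset Strict Implicit. Unset Printing Implicit Defensive.
Import GRing.Theory.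

(* Let s be such that omega_1(x) = ... = omega_(s-1)(x) = k - 2; we induct on
   d + 1 - s.  The hypothesis on r gives an exponent >= 2^d, which rules out
   s = d + 1 (the exponents reduced mod 2^d would already exhaust the degree).
   If omega_s(x) < k - 2 then x itself lies in P^-; if omega_s(x) = k - 2 we
   pass to s + 1.  Otherwise a parity count excludes omega_s(x) = k - 1, so
   omega_s(x) = k, whence s = t + 2.  Choosing a with digit t of x_a equal to 0
   and writing x = y x_a^(2^t), the Cartan formula gives, in characteristic 2,
   x = Sq^(2^t)(y) + sum_(j != a) C(y_j, 2^t) y x_j^(2^t) + R, where R lies in
   P^- and each middle monomial satisfies the hypotheses with s = t + 3. *)

(* Lucas' theorem mod 2, one binary digit at a time. *)
Lemma odd_bin_half m n :
  odd 'C(m, n) = odd 'C(m %/ 2, n %/ 2) && (odd n ==> odd m).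
Proof.
elim: m n => [|m IH] [|n].
- by [].
- rewrite !bin0n; case: n => [|n] //=.
  by have -> : (n.+2 %/ 2 == 0) = false by lia.
- by rewrite !bin0.
rewrite binS oddD !IH.
have -> : m.+1 %/ 2 = m %/ 2 + odd m by lia.
have -> : n.+1 %/ 2 = n %/ 2 + odd n by lia.
rewrite /=; case: (odd m); case: (odd n); rewrite ?addn0 ?addn1 /= ?andbT ?andbF ?addbF ?addFb //.
all: by rewrite ?binS ?oddD ?addbb.
Qed.

Lemma odd_bin_digit u a e :
  odd 'C(a, e) -> 2 ^ u %| e -> odd (e %/ 2 ^ u) -> odd (a %/ 2 ^ u).
Proof.
elim: u a e => [|u IH] a e.
  by rewrite expn0 !divn1 odd_bin_half => /andP[_ /implyP].
rewrite odd_bin_half => /andP[hC _] hd ho.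
have h2 : 2 %| e by apply: dvdn_trans hd; rewrite expnS dvdn_mulr.
rewrite expnS divnMA; apply: (IH _ (e %/ 2)) => //.
  by rewrite (dvdn_divRL _ h2) -expnSr.
by move: ho; rewrite expnS divnMA.
Qed.

Lemma odd_bin_pow2 u a : odd 'C(a, 2 ^ u) = odd (a %/ 2 ^ u).
Proof.
apply/idP/idP => [hC|].
  by apply: (odd_bin_digit hC (dvdnn _)); rewrite divnn expn_gt0.
elim: u a => [|u IH] a; first by rewrite expn0 divn1 bin1.
move=> h; rewrite odd_bin_half expnS mulKn // oddM /= andbT.
by apply: IH; move: h; rewrite expnS divnMA.
Qed.

Lemma alpha_le1 i a : alpha i a <= 1.
Proof. by rewrite /alpha; case: odd. Qed.

Lemma alphaS t v : alpha t.+1 v = odd (v %/ 2 ^ t %/ 2).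
Proof. by rewrite /alpha expnSr divnMA. Qed.

Lemma alpha_addMr i y c : 2 ^ i.+1 %| c -> alpha i (y + c) = alpha i y.
Proof.
move/dvdnP=> [w ->]; rewrite /alpha expnS mulnA addnC divnMDl ?expn_gt0 //.
by rewrite oddD oddM /= andbF.
Qed.

Lemma divnDpow2 v t : (v + 2 ^ t) %/ 2 ^ t = v %/ 2 ^ t + 1.
Proof. by rewrite addnC divnDl ?dvdnn // divnn expn_gt0 addnC. Qed.

Lemma sum_digits v B : \sum_(i < B) 2 ^ i * alpha i v = v %% 2 ^ B.
Proof.
elim: B => [|B IH]; first by rewrite big_ord0 expn0 modn1.
rewrite big_ord_recr /= IH /alpha.
have hp : 0 < 2 ^ B by rewrite expn_gt0.
rewrite {3}(divn_eq v (2 ^ B)).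
set w := v %/ 2 ^ B; set r := v %% 2 ^ B.
have hr : r < 2 ^ B by rewrite ltn_mod.
rewrite {2}(divn_eq w 2) modn2 expnS.
have -> : (w %/ 2 * 2 + odd w) * 2 ^ B + r
          = w %/ 2 * (2 * 2 ^ B) + (r + 2 ^ B * odd w).
  by rewrite mulnDl -mulnA (mulnC (odd w)); lia.
rewrite modnMDl modn_small //.
by case: (odd w); lia.
Qed.

Lemma sum_pow2 B : \sum_(i < B) 2 ^ i = 2 ^ B - 1.
Proof.
elim: B => [|B IH]; first by rewrite big_ord0.
rewrite big_ord_recr /= IH expnS.
have : 0 < 2 ^ B by rewrite expn_gt0.
lia.
Qed.

Lemma dvdn_pow2_digits t v : (forall u, u < t -> ~~ odd (v %/ 2 ^ u)) -> 2 ^ t %| v.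
Proof.
elim: t => [|t IH] h; first by rewrite expn0 dvd1n.
have /dvdnP [w hw] := IH (fun u hu => h u (ltnW hu)).
have := h t (ltnSn t); rewrite hw mulnK ?expn_gt0 // => hw2.
by rewrite expnS dvdn_pmul2r ?expn_gt0 // dvdn2.
Qed.

Lemma ltn_sum_strict (I : finType) (f g : I -> nat) (i0 : I) :
  (forall i, f i <= g i) -> f i0 < g i0 -> \sum_i f i < \sum_i g i.
Proof.
move=> h h0; rewrite (bigD1 i0) //= [X in _ < X](bigD1 i0) //= -addSn.
by apply: leq_add => //; apply: leq_sum => i _; exact: h.
Qed.

Lemma lowest_common_digit (I : finType) (e : I -> nat) t :
  \sum_l e l = 2 ^ t -> ~ (exists j, forall l, e l = (l == j) * 2 ^ t) ->
  exists t' j, [/\ t' < t, forall l, 2 ^ t' %| e l & odd (e j %/ 2 ^ t')].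
Proof.
move=> hsum hns.
have [l0 hl0] : exists l, 0 < e l.
  have : \sum_l e l != 0 by rewrite hsum -lt0n expn_gt0.
  by rewrite sum_nat_eq0 negb_forall => /existsP [l]; rewrite -lt0n; exists l.
have exP : exists u, [exists l, odd (e l %/ 2 ^ u)].
  exists (trunc_log 2 (e l0)); apply/existsP; exists l0.
  have h1 := trunc_logP (isT : 1 < 2) hl0.
  have h2 := trunc_log_ltn (e l0) (isT : 1 < 2).
  have hq1 : 1 <= e l0 %/ 2 ^ trunc_log 2 (e l0) by rewrite leq_divRL ?expn_gt0 // mul1n.
  have hq2 : e l0 %/ 2 ^ trunc_log 2 (e l0) < 2 by rewrite ltn_divLR ?expn_gt0 // -expnS.
  by have -> : e l0 %/ 2 ^ trunc_log 2 (e l0) = 1 by lia.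
case: (ex_minnP exP) => t' /existsP [j hj] hmin.
have hdvd : forall l, 2 ^ t' %| e l.
  move=> l; apply: dvdn_pow2_digits => u hu; apply/negP => ho.
  by have := hmin u (introT existsP (ex_intro _ l ho)); rewrite leqNgt hu.
exists t', j; split => //; rewrite ltnNge; apply/negP => htt; apply: hns; exists j.
have hdvd_t l : 2 ^ t %| e l by apply: dvdn_trans (hdvd l); apply: dvdn_exp2l.
have hj0 : 0 < e j by move: hj; rewrite lt0n; apply: contraL => /eqP ->; rewrite div0n.
have hej : e j <= 2 ^ t by rewrite -hsum (bigD1 j) //= leq_addr.
have {hej} hej : e j = 2 ^ t by apply/eqP; rewrite eqn_leq hej dvdn_leq.
have hrest : \sum_(l | l != j) e l = 0 by move: hsum; rewrite (bigD1 j) //= hej; lia.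
move=> l; case: (eqVneq l j) => [->|hl]; first by rewrite mul1n.
rewrite mul0n; apply/eqP; move/eqP: hrest; rewrite sum_nat_eq0 => /forallP /(_ l).
by rewrite hl.
Qed.

(* Adding e, with 2^u | e and C(y, e) odd, never creates a digit u, and erases
   digit u of y when digit u of e is 1 (there is no carry into digit u). *)
Lemma alpha_add_bin u y e : 2 ^ u %| e -> odd 'C(y, e) ->
  alpha u (y + e) <= alpha u y /\ (odd (e %/ 2 ^ u) -> alpha u (y + e) < alpha u y).
Proof.
move=> hd hC; rewrite /alpha addnC divnDl // addnC oddD.
case he: (odd (e %/ 2 ^ u)); last by rewrite addbF.
by rewrite (odd_bin_digit hC hd he).
Qed.

Lemma alpha_carry t v : alpha t v = 1 -> alpha t.+1 v = 1 ->
  alpha t (v + 2 ^ t) = 0 /\ alpha t.+1 (v + 2 ^ t) = 0.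
Proof. rewrite !alphaS /alpha !divnDpow2; move: (v %/ 2 ^ t) => q; split; lia. Qed.

Lemma alpha_borrow t v : alpha t (v + 2 ^ t) = 0 -> alpha t.+1 (v + 2 ^ t) = 1 ->
  [/\ alpha t v = 1, alpha t.+1 v = 0 & (v + 2 ^ t) %/ 2 ^ t.+2 = v %/ 2 ^ t.+2].
Proof.
have e4 : 2 ^ t.+2 = 2 ^ t * 4 by rewrite !expnSr -mulnA.
rewrite !alphaS /alpha e4 !divnMA !divnDpow2; move: (v %/ 2 ^ t) => q; split; lia.
Qed.

Section Weights.

Variable k : nat.
Implicit Types x : 'X_{1..k}.

(* omega_1, ..., omega_(s-1) of x all equal k - 2: for s <= d + 1 this says that
   omega(x) agrees with (k-2)|^d in its first s - 1 entries. *)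
Definition top_prefix (s : nat) x := forall i, 1 <= i < s -> omega i x = k - 2.

Lemma top_prefixS s x : top_prefix s x -> omega s x = k - 2 -> top_prefix s.+1 x.
Proof.
move=> top hs i /andP[i1 i2]; case: (ltngtP i s) => [hi|hi|->] //; last by lia.
by apply: top; rewrite i1.
Qed.

Lemma sum_low_parts B x :
  \sum_(j < k) (x j %% 2 ^ B) = \sum_(i < B) 2 ^ i * omega i.+1 x.
Proof.
under eq_bigr => j _ do rewrite -sum_digits.
by rewrite exchange_big; apply: eq_bigr => i _; rewrite /omega big_distrr.
Qed.

Lemma sum_low_top s x :
  top_prefix s.+1 x -> \sum_(j < k) (x j %% 2 ^ s) = (k - 2) * (2 ^ s - 1).
Proof.
move=> top; rewrite sum_low_parts -sum_pow2 big_distrr /=.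
by apply: eq_bigr => i _; rewrite top ?ltnS ?ltn_ord // mulnC.
Qed.

Lemma omega_le i x : omega i x <= k.
Proof.
rewrite -[k in _ <= k]card_ord -sum1_card /omega.
by apply: leq_sum => j _; exact: alpha_le1.
Qed.

Lemma omega_eq_k i x : omega i x = k -> forall j, alpha i.-1 (x j) = 1.
Proof.
move=> h j; apply/eqP; rewrite eqn_leq alpha_le1 lt0n /=.
apply/negP => /eqP h0; have : omega i x <= k.-1.
  rewrite /omega (bigD1 j) //= h0 add0n.
  apply: (leq_trans (n := \sum_(l < k | l != j) 1)).
    by apply: leq_sum => l _; exact: alpha_le1.
  by rewrite sum1_card cardC1 card_ord.
by rewrite h => hk; have := ltn_ord j; lia.
Qed.

Lemma omega_lt_k i x : omega i x < k -> exists j, alpha i.-1 (x j) = 0.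
Proof.
move=> h; case: (pickP (fun j => alpha i.-1 (x j) == 0)) => [j /eqP|H]; first by exists j.
suff e : omega i x = k by rewrite e ltnn in h.
rewrite /omega -[k in RHS]card_ord -sum1_card; apply: eq_bigr => j _.
by move: (H j) (alpha_le1 i.-1 (x j)) => /= /negbT; case: alpha => [|[]].
Qed.

Lemma omega_gt0 i x : 0 < omega i x -> exists j, 0 < alpha i.-1 (x j).
Proof.
move=> h; case: (pickP (fun j => 0 < alpha i.-1 (x j))) => [j hj|H]; first by exists j.
suff e : omega i x = 0 by rewrite e in h.
by rewrite /omega big1 // => j _; move: (H j) => /= /negbT; rewrite -eqn0Ngt => /eqP.
Qed.

Lemma large_exponent d x :
  (exists r, d < r /\ 0 < omega r x) -> exists j, 2 ^ d <= x j.
Proof.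
case=> r [hr /omega_gt0 [j hj]]; exists j.
have h1 : 1 <= x j %/ 2 ^ r.-1 by move: hj; rewrite /alpha; case: (x j %/ _).
rewrite leq_divRL ?expn_gt0 // mul1n in h1.
by apply: leq_trans h1; rewrite leq_pexp2l //; move: hr; case: (r).
Qed.

(* If deg x = (k-2)(2^d-1) and omega(x) starts with (k-2)|^d, then the reduced
   exponents already exhaust the degree: all exponents are below 2^d. *)
Lemma exponents_small d x :
  mdeg x = (k - 2) * (2 ^ d - 1) -> top_prefix d.+1 x -> forall j, x j < 2 ^ d.
Proof.
move=> hdeg top j; rewrite ltnNge; apply/negP => hj.
have : \sum_(l < k) (x l %% 2 ^ d) < \sum_(l < k) x l.
  apply: (ltn_sum_strict (i0 := j)) => [l|]; first exact: leq_mod.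
  by apply: leq_trans hj; rewrite ltn_mod expn_gt0.
by rewrite sum_low_top // -mdegE hdeg ltnn.
Qed.

(* The arithmetic behind the parity obstruction below (P = 2^(s-1), K = k-2):
   the two sides differ by P times an odd number, so they cannot be equal. *)
Lemma not_pow2_odd_multiple K P E T : 0 < P -> 0 < E ->
  K * (2 * P * E - 1) <> K * (P - 1) + P * (K + 1) + 2 * P * T.
Proof.
move=> hP hE h; have : P * (2 * K * E) = P * (2 * K + 1 + 2 * T) by nia.
by move/eqP; rewrite eqn_pmul2l // => /eqP; lia.
Qed.

(* Parity obstruction: if omega(x) starts with s-1 entries k-2 (s <= d), then
   omega_s(x) = k-1 would make deg x differ from (k-2)(2^d-1) modulo 2^s. *)
Lemma omega_neq_pred d s x : 2 <= k -> 1 <= s <= d ->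
  mdeg x = (k - 2) * (2 ^ d - 1) -> top_prefix s x -> omega s x <> k.-1.
Proof.
move=> hk; case: s => // s /andP[_ hsd] hdeg top hw.
set T := \sum_(j < k) (x j %/ 2 ^ s.+1).
have e0 : mdeg x = \sum_(j < k) (x j %% 2 ^ s.+1) + 2 ^ s.+1 * T.
  rewrite mdegE big_distrr -big_split /=; apply: eq_bigr => j _.
  by rewrite {1}(divn_eq (x j) (2 ^ s.+1)) addnC mulnC.
move: e0; rewrite sum_low_parts big_ord_recr /= hw -sum_low_parts sum_low_top //.
rewrite hdeg -(subnKC hsd) expnD expnS (_ : k.-1 = (k - 2) + 1); last by lia.
by apply: not_pow2_odd_multiple; rewrite expn_gt0.
Qed.

Lemma omega_swap2 i x (z : 'X_{1..k}) (a j : 'I_k) : a != j ->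
  (forall l, l != a -> l != j -> z l = x l) ->
  omega i z + alpha i.-1 (x a) + alpha i.-1 (x j)
  = omega i x + alpha i.-1 (z a) + alpha i.-1 (z j).
Proof.
move=> haj h; have hja : j != a by rewrite eq_sym.
have ef F : \sum_l F l = F a + (F j + \sum_(l | (l != a) && (l != j)) F l :> nat).
  by rewrite (bigD1 a) //= (bigD1 j) //=.
rewrite /omega !ef (eq_bigr (fun l => alpha i.-1 (x l))); last first.
  by move=> l /andP[h1 h2]; rewrite h.
move: (\sum_(l | _) _) => S; lia.
Qed.

End Weights.

Local Open Scope ring_scope.

Section Decompositions.

Variables k d : nat.
Implicit Types p q f : {mpoly 'F_2[k]}.

Definition minus_monomial (m : 'X_{1..k}) : Prop :=
  mdeg m = ((k - 2) * (2 ^ d - 1))%N /\ weight_lt d m.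

Lemma Pminus0 : Pminus d (0 : {mpoly 'F_2[k]}).
Proof. by move=> m; rewrite mcoeff_msupp mcoeff0 eqxx. Qed.

Lemma PminusD p q : Pminus d p -> Pminus d q -> Pminus d (p + q).
Proof.
by move=> hp hq m /msuppD_le; rewrite mem_cat => /orP[]; [exact: hp | exact: hq].
Qed.

Lemma Pminus_sum (I : finType) (P : pred I) (F : I -> {mpoly 'F_2[k]}) :
  (forall i, P i -> Pminus d (F i)) -> Pminus d (\sum_(i | P i) F i).
Proof. by move=> h; apply: big_ind => //; [exact: Pminus0 | exact: PminusD]. Qed.

Lemma PminusZX (c : 'F_2) m : (c != 0 -> minus_monomial m) -> Pminus d (c *: 'X_[m]).
Proof.
move=> h m'; rewrite mcoeff_msupp mcoeffZ mcoeffX.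
by case: (eqVneq m m') => [<- |_]; [rewrite mulr1 => /h | rewrite mulr0 eqxx].
Qed.

Definition decomposable f := exists p q, Pminus d p /\ hitd d q /\ f = p + q.

Lemma decomposable_Pminus p : Pminus d p -> decomposable p.
Proof. by move=> h; exists p, 0; split => //; split; [exact: hitd0 | rewrite addr0]. Qed.

Lemma decomposable_hit q : hitd d q -> decomposable q.
Proof. by move=> h; exists 0, q; split; [exact: Pminus0 | split => //; rewrite add0r]. Qed.

Lemma decomposableD f g : decomposable f -> decomposable g -> decomposable (f + g).
Proof.
move=> [p1 [q1 [hp1 [hq1 ->]]]] [p2 [q2 [hp2 [hq2 ->]]]].
exists (p1 + p2), (q1 + q2); split; first exact: PminusD.
by split; [exact: hitdD | rewrite addrACA].
Qed.

Lemma decomposable_sum (I : finType) (P : pred I) (F : I -> {mpoly 'F_2[k]}) :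
  (forall i, P i -> decomposable (F i)) -> decomposable (\sum_(i | P i) F i).
Proof.
move=> h; apply: big_ind => //; last exact: decomposableD.
exact/decomposable_Pminus/Pminus0.
Qed.

End Decompositions.

Lemma natr_F2 n : (n%:R : 'F_2) = (odd n)%:R.
Proof.
rewrite {1}(divn_eq n 2) modn2 natrD natrM.
by rewrite (_ : 2%:R = 0 :> 'F_2) ?mulr0 ?add0r //; apply: val_inj.
Qed.

Lemma oppr_F2 k (v : {mpoly 'F_2[k]}) : - v = v.
Proof.
have v2 : v + v = 0.
  rewrite -mulr2n -scaler_nat (_ : 2%:R = 0 :> 'F_2) ?scale0r //.
  exact: val_inj.
by rewrite -[- v]add0r -v2 addrK.
Qed.

Section SquareOfMonomial.

Variable k : nat.
Implicit Types y : 'X_{1..k}.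

Definition mshift (P : nat) y (e : {ffun 'I_k -> 'I_P.+1}) : 'X_{1..k} :=
  [multinom (y j + e j)%N | j < k].

(* The exponent vector with P at j and 0 elsewhere: it indexes the term
   C(y_j, P) y x_j^P of Sq^P(y). *)
Definition single_exp (P : nat) (j : 'I_k) : {ffun 'I_k -> 'I_P.+1} :=
  [ffun l => if l == j then ord_max else ord0].

Lemma mshiftE P y (e : {ffun 'I_k -> 'I_P.+1}) l : mshift y e l = (y l + e l)%N.
Proof. by rewrite /mshift mnmE. Qed.

Lemma mdeg_mshift P y (e : {ffun 'I_k -> 'I_P.+1}) :
  mdeg (mshift y e) = (mdeg y + \sum_(l < k) (e l : nat))%N.
Proof. by rewrite !mdegE -big_split /=; apply: eq_bigr => l _; exact: mshiftE. Qed.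

Lemma single_expE P j l : (single_exp P j l : nat) = ((l == j) * P)%N.
Proof. by rewrite ffunE; case: (l == j); rewrite ?mul1n ?mul0n. Qed.

Lemma sum_single_exp P j : (\sum_(l < k) (single_exp P j l : nat))%N = P.
Proof.
rewrite (bigD1 j) //= big1 ?addn0; first by rewrite ffunE eqxx.
by move=> l /negbTE hl; rewrite ffunE hl.
Qed.

Lemma single_exp_inj P : (0 < P)%N -> injective (single_exp P).
Proof.
move=> hP j1 j2 /ffunP /(_ j1); rewrite !ffunE eqxx.
by case: eqP => // _ /(congr1 val) /= h; rewrite h in hP.
Qed.

Lemma Sq_X i y : Sq i 'X_[y] = Sqmon i y.
Proof. by rewrite /Sq msuppX big_seq1 mcoeffX eqxx scale1r. Qed.

Lemma Sqmon_split P y : (0 < P)%N ->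
  Sqmon P y = \sum_(j < k) 'C(y j, P)%:R *: 'X_[mshift y (single_exp P j)] +
   \sum_(e : {ffun 'I_k -> 'I_P.+1} | ((\sum_(j < k) (e j : nat))%N == P) &&
        (e \notin [set single_exp P j | j : 'I_k]))
       (\prod_(j < k) 'C(y j, e j))%:R *: 'X_[mshift y e].
Proof.
move=> hP; rewrite /Sqmon (bigID (mem [set single_exp P j | j : 'I_k])) /=.
congr (_ + _).
rewrite (eq_bigl (mem [set single_exp P j | j : 'I_k])); last first.
  move=> e; apply/andP/idP => [[//]|h]; split => //.
  by case/imsetP: h => j _ ->; rewrite sum_single_exp.
rewrite big_imset /=; last by move=> j1 j2 _ _; apply: single_exp_inj.
apply: eq_bigr => j _; congr (_%:R *: _).
rewrite (bigD1 j) //= big1 ?muln1; first by rewrite ffunE eqxx.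
by move=> l /negbTE hl; rewrite ffunE hl bin0.
Qed.

End SquareOfMonomial.

Local Close Scope ring_scope.

Section LiftingStep.

(* Writing x = y x_a^(2^t) for an index a
   whose digit t is 0, x is compared with the other terms of Sq^(2^t)(y). *)
Variables k d t : nat.
Variable x : 'X_{1..k}.
Hypothesis htd : t.+2 <= d.
Hypothesis top : top_prefix t.+2 x.
Hypothesis full : omega t.+2 x = k.
Hypothesis hdeg : mdeg x = (k - 2) * (2 ^ d - 1).

Section Splitting.

Variables (y : 'X_{1..k}) (a : 'I_k).
Hypothesis hxy : forall l, x l = y l + (l == a) * 2 ^ t.

Lemma mdeg_split : mdeg x = mdeg y + 2 ^ t.
Proof.
rewrite !mdegE (eq_bigr _ (fun l _ => hxy l)) big_split /=; congr (_ + _).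
by rewrite (bigD1 a) //= eqxx mul1n big1 ?addn0 // => l /negbTE ->.
Qed.

Lemma low_digits_split i l : i < t -> alpha i (y l) = alpha i (x l).
Proof. by move=> hi; rewrite hxy alpha_addMr // dvdn_mull // dvdn_exp2l. Qed.

(* The terms of Sq^(2^t)(y) acting on several variables lie in P^-: at the
   lowest digit t' < t occurring in the exponent vector e, omega_(t'+1) drops
   below omega_(t'+1)(x) = k - 2, the earlier weights being unchanged. *)
Lemma residual_minus (e : {ffun 'I_k -> 'I_(2 ^ t).+1}) :
  \sum_(j < k) (e j : nat) = 2 ^ t -> e \notin [set single_exp (2 ^ t) j | j : 'I_k] ->
  odd (\prod_(j < k) 'C(y j, e j)) -> minus_monomial d (mshift y e).
Proof.
move=> hsum hns hodd.
have hC l : odd 'C(y l, e l) by move: hodd; rewrite (bigD1 l) //= oddM => /andP[].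
have [|t' [j [ht' hdvd hj]]] := lowest_common_digit hsum.
  move=> [j hj]; move/negP: hns; apply; apply/imsetP; exists j => //.
  by apply/ffunP => l; apply/val_inj; rewrite /= single_expE hj.
have low i l : i < t' -> alpha i (mshift y e l) = alpha i (x l).
  move=> hi; rewrite mshiftE alpha_addMr; last first.
    by apply: dvdn_trans (hdvd l); apply: dvdn_exp2l.
  by rewrite low_digits_split //; lia.
split; first by rewrite mdeg_mshift hsum -mdeg_split.
exists t'.+1; split => //; split.
  move=> s /andP[s1 s2]; rewrite /wtop s1 (_ : s <= d); last by lia.
  rewrite -(@top s); last by apply/andP; split => //; lia.
  by apply: eq_bigr => l _; apply: low; lia.
rewrite /wtop /= (_ : t'.+1 <= d); last by lia.
rewrite -(@top t'.+1) ?ltnS //; last by lia.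
rewrite /omega /=.
rewrite [X in _ < X](eq_bigr (fun l => alpha t' (y l))); last first.
  by move=> l _; rewrite low_digits_split.
apply: (ltn_sum_strict (i0 := j)) => [l|]; rewrite mshiftE.
  by case: (alpha_add_bin (hdvd l) (hC l)).
by case: (alpha_add_bin (hdvd j) (hC j)) => _; apply.
Qed.

Hypothesis hxa : alpha t (x a) = 0.

Section SingleTerm.

Variable j : 'I_k.
Hypothesis hja : j != a.
Hypothesis hC : odd 'C(y j, 2 ^ t).

Let z := mshift y (single_exp (2 ^ t) j).

Lemma single_termE l : z l = y l + (l == j) * 2 ^ t.
Proof. by rewrite /z mshiftE single_expE. Qed.

Lemma single_term_other l : l != a -> l != j -> z l = x l.
Proof.
by move=> la lj; rewrite single_termE hxy (negbTE la) (negbTE lj) !mul0n !addn0.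
Qed.

Lemma single_term_at_a : z a = y a.
Proof. by rewrite single_termE eq_sym (negbTE hja) mul0n addn0. Qed.

Lemma single_term_at_j : z j = x j + 2 ^ t.
Proof. by rewrite single_termE hxy (negbTE hja) eqxx mul0n mul1n addn0. Qed.

(* x_a has digits (t, t+1) equal to (0, 1), so y_a = x_a - 2^t has (1, 0). *)
Lemma y_digits_a :
  [/\ alpha t (y a) = 1, alpha t.+1 (y a) = 0 & x a %/ 2 ^ t.+2 = y a %/ 2 ^ t.+2].
Proof.
have := omega_eq_k full a; rewrite /= hxy eqxx mul1n => h1.
by move: hxa; rewrite hxy eqxx mul1n => h0; apply: alpha_borrow.
Qed.

(* Moving 2^t from x_a to x_j turns digits (t, t+1) of x_a from (0,1) into
   (1,0) and those of x_j from (1,1) into (0,0): omega_(t+1) and omega_(t+2)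
   both become k - 2, and the lower weights are unchanged. *)
Lemma single_term_top : top_prefix t.+3 z.
Proof.
have hxj0 : alpha t (x j) = 1.
  by rewrite hxy (negbTE hja) mul0n addn0 /alpha -odd_bin_pow2 hC.
have hxj1 : alpha t.+1 (x j) = 1 := omega_eq_k full j.
have [hzj0 hzj1] := alpha_carry hxj0 hxj1.
have [hya0 hya1 _] := y_digits_a.
have haj : a != j by rewrite eq_sym.
have swap i := omega_swap2 i haj single_term_other.
move=> i /andP[i1 i2].
have [hi|hi] := ltnP i t.+1.
  rewrite -(@top i); last by apply/andP; split => //; lia.
  apply: eq_bigr => l _; case: (eqVneq l j) => [->|lj].
    by rewrite single_term_at_j alpha_addMr ?dvdn_exp2l //; lia.
  case: (eqVneq l a) => [->|la]; last by rewrite single_term_other.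
  by rewrite single_term_at_a low_digits_split //; lia.
have [hi2|hi2] := ltnP i t.+2.
  have := swap t.+1; rewrite (_ : i = t.+1) /=; last by lia.
  have top1 : omega t.+1 x = k - 2 by apply: top; rewrite /= ltnSn.
  by rewrite single_term_at_a single_term_at_j hxa hxj0 hya0 hzj0 top1; lia.
have := swap t.+2; rewrite (_ : i = t.+2) /=; last by lia.
rewrite single_term_at_a single_term_at_j full !(omega_eq_k full) hya1 hzj1.
by lia.
Qed.

Lemma single_term_deg : mdeg z = (k - 2) * (2 ^ d - 1).
Proof. by rewrite mdeg_mshift sum_single_exp -mdeg_split. Qed.

(* A large exponent survives: x_j only grows, and x_a keeps its digits >= t+2. *)
Lemma single_term_large : (exists l, 2 ^ d <= x l) -> exists l, 2 ^ d <= z l.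
Proof.
case=> l hl; case: (eqVneq l a) => [el|la]; last first.
  exists l; apply: leq_trans hl _.
  by rewrite single_termE hxy (negbTE la) mul0n addn0 leq_addr.
exists a; rewrite single_term_at_a; rewrite el in hl.
have high v : (2 ^ d <= v) = (2 ^ (d - t.+2) <= v %/ 2 ^ t.+2).
  by rewrite leq_divRL ?expn_gt0 // -expnD subnK.
by move: hl; rewrite !high; case: y_digits_a => _ _ ->.
Qed.

End SingleTerm.

End Splitting.

(* Lifting step.  In characteristic 2, x = Sq^(2^t)(y) + sum_(j != a) C(y_j, 2^t)
   y x_j^(2^t) + R with R in P^-; the middle terms have a longer top prefix. *)
Lemma lift_step : 0 < k ->
  (forall z : 'X_{1..k}, top_prefix t.+3 z -> mdeg z = (k - 2) * (2 ^ d - 1) ->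
     (exists l, 2 ^ d <= z l) -> decomposable d ('X_[z] : {mpoly 'F_2[k]})) ->
  (exists l, 2 ^ d <= x l) -> decomposable d ('X_[x] : {mpoly 'F_2[k]}).
Proof.
move=> hk IH large.
have [a hxa] : exists a, alpha t (x a) = 0.
  by apply: (omega_lt_k (i := t.+1)); rewrite (@top t.+1) /= ?ltnSn //; lia.
have hPa : 2 ^ t <= x a.
  have : 1 <= x a %/ 2 ^ t.+1 by move: (omega_eq_k full a); rewrite /alpha; case: (_ %/ _).
  by rewrite leq_divRL ?expn_gt0 // mul1n => h; apply: leq_trans h; rewrite leq_exp2l.
pose y : 'X_{1..k} := [multinom x l - (l == a) * 2 ^ t | l < k].
have hxy l : x l = y l + (l == a) * 2 ^ t.
  by rewrite mnmE; case: (eqVneq l a) => [->|_]; rewrite ?mul1n ?subnK // mul0n subn0 addn0.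
have hP : 0 < 2 ^ t by rewrite expn_gt0.
have hCa : odd (y a %/ 2 ^ t) by case: (y_digits_a hxy hxa); rewrite /alpha; case: odd.
have hma : mshift y (single_exp (2 ^ t) a) = x.
  by apply/mnmP => l; rewrite mshiftE single_expE hxy.
have := Sqmon_split y hP; rewrite (bigD1 a) //= natr_F2 odd_bin_pow2 hCa scale1r hma.
set B := (\sum_(j < k | j != a) _)%R; set R := (\sum_(e | _) _)%R => hsq.
have -> : 'X_[x] = (Sq (2 ^ t) 'X_[y] + R + B)%R.
  by rewrite -[R]oppr_F2 -[B]oppr_F2 Sq_X hsq !addrK.
apply: decomposableD; first apply: decomposableD.
- apply/decomposable_hit/(@hitdSq k d [:: 2 ^ t]) => //=.
  by rewrite hP ltn_exp2l //; lia.
- apply/decomposable_Pminus/Pminus_sum => e /andP[/eqP he1 he2]; apply: PminusZX.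
  rewrite natr_F2 => hc; apply: (residual_minus hxy) => //.
  by case: odd hc; rewrite ?eqxx.
- apply: decomposable_sum => j hj; rewrite natr_F2; case hC: odd; last first.
    by rewrite scale0r; apply/decomposable_Pminus/Pminus0.
  rewrite scale1r; apply: IH.
  + exact: (single_term_top hxy hxa hj hC).
  + exact: (single_term_deg hxy).
  + exact: (single_term_large hxy hxa hj large).
Qed.

End LiftingStep.

Lemma decomposable_top_prefix k d n s (x : 'X_{1..k}) : 4 <= k ->
  s + n = d.+1 -> 1 <= s -> top_prefix s x -> mdeg x = (k - 2) * (2 ^ d - 1) ->
  (exists l, 2 ^ d <= x l) -> omega 1 x < k ->
  decomposable d ('X_[x] : {mpoly 'F_2[k]}).
Proof.
move=> hk; elim: n s x => [|n IH] s x hsn hs top hdeg large h1.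
  (* s = d + 1 is impossible: all exponents of x would be below 2^d *)
  case: large => l; rewrite leqNgt exponents_small //.
  by rewrite (_ : d.+1 = s) //; lia.
have hsd : s <= d by lia.
case: (ltngtP (omega s x) (k - 2)) => hws.
- (* omega(x) < (k-2)|^d already at entry s: x lies in P^- *)
  apply: decomposable_Pminus => m; rewrite msuppX inE => /eqP ->.
  split => //; exists s; split => //; split; last by rewrite /wtop hs hsd.
  move=> i /andP[i1 i2]; rewrite /wtop i1 (_ : i <= d); last by lia.
  by apply: top; rewrite i1.
- (* omega_s(x) > k - 2 forces omega_s(x) = k, and s >= 2 since omega_1(x) < k *)
  have hwk : omega s x = k.
    have := omega_le s x; have := omega_neq_pred (s := s) _ _ hdeg top.
    by rewrite hs hsd; lia.
  case: s hsn hs top hws hsd hwk => [//|[|t]] hsn hs top hws hsd hwk.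
    by rewrite hwk ltnn in h1.
  apply: (@lift_step k d t x) => //; first by lia.
  move=> z topz degz largez.
  apply: (IH t.+3) => //; first by lia.
  by rewrite (topz 1 isT); lia.
-
  apply: (IH s.+1) => //; [lia | exact: top_prefixS].
Qed.

Local Open Scope ring_scope.

Theorem lemma3 (k d : nat) (x : 'X_{1..k}) :
  (4 <= k)%N -> (1 <= d)%N ->
  mdeg x = ((k - 2) * (2 ^ d - 1))%N ->
  (omega 1 x < k)%N ->
  (exists r : nat, (d < r)%N /\ (0 < omega r x)%N) ->
  exists p q : {mpoly 'F_2[k]},
    Pminus d p /\ hitd d q /\ ('X_[x] : {mpoly 'F_2[k]}) = p + q.
Proof.
move=> hk _ hdeg h1 hr.
apply: (@decomposable_top_prefix k d d 1) => //.
- by move=> i; lia.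
- exact: large_exponent hr.
Qed.
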